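(* Let $M$ be an $m\times n$ Boolean measurement matrix that is $(0,0,e'_0,e'_1)$-resilient for $d$-sparse vectors. Then $m\ge d\log(n/d)-d-e'_0-O\big(e'_1\log((n-d-e'_0)/e'_1)\big)$, where the last term is defined to be zero when $e'_1=0$.
   Context: Logarithms are base 2. For $x\in\{0,1\}^n$, $\mathrm{supp}(x)$ is the set of nonzero coordinates and $x$ is $d$-sparse if $|\mathrm{supp}(x)|\le d$. For an $m\times n$ Boolean matrix $M$ and $x\in\{0,1\}^n$, $M[x]\in\{0,1\}^m$ is the bitwise OR of the columns of $M$ indexed by $\mathrm{supp}(x)$. An ordered pair $(x,y)$ of binary vectors is $(e_0,e_1)$-close if $y$ can be obtained from $x$ by flipping at most $e_0$ bits from 0 to 1 and at most $e_1$ bits from 1 to 0; otherwise $(e_0,e_1)$-far. $M$ is $(e_0,e_1,e'_0,e'_1)$-resilient for $d$-sparse vectors if for every $y\in\{0,1\}^m$ there exists $z\in\{0,1\}^n$ such that for every $d$-sparse $x$: if $(x,z)$ is $(e'_0,e'_1)$-far then $(M[x],y)$ is $(e_0,e_1)$-far. *)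

From mathcomp Require Import all_boot.
From Stdlib Require Import Reals.

Set Implicit Arguments.
Unset Strict Implicit.
Unset Printing Implicit Defensive.

Definition bvec (n : nat) := 'I_n -> bool.
Definition bmatrix (m n : nat) := 'I_m -> 'I_n -> bool.

Definition supp (n : nat) (x : bvec n) : {set 'I_n} := [set i | x i].

Definition sparse (n d : nat) (x : bvec n) : bool := #|supp x| <= d.

Definition measure (m n : nat) (M : bmatrix m n) (x : bvec n) : bvec m :=
  fun i => [exists j : 'I_n, (j \in supp x) && M i j].

Definition close (n e0 e1 : nat) (x y : bvec n) : bool :=
  (#|[set i | ~~ x i && y i]| <= e0) && (#|[set i | x i && ~~ y i]| <= e1).

Definition far (n e0 e1 : nat) (x y : bvec n) : bool := ~~ close e0 e1 x y.

Definition resilient (m n : nat) (e0 e1 e0' e1' d : nat) (M : bmatrix m n) : Prop :=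
  forall y : bvec m, exists z : bvec n, forall x : bvec n,
    sparse d x -> far e0' e1' x z -> far e0 e1 (measure M x) y.

Definition log2 (r : R) : R := (ln r / ln 2)%R.

From mathcomp Require Import all_boot.
From Stdlib Require Import Reals Lra.
(* Importing [Reals] rebinds [^] in [nat_scope] to [Nat.pow]; restore [expn]. *)
From mathcomp Require Import ssrnat.

Set Implicit Arguments.
Unset Strict Implicit.
Unset Printing Implicit Defensive.

(* Sort the d-subsets of the n columns by their measurement outcome, a subset of
   the m rows.  For each outcome Y, resilience yields one decoded set Z such that
   every d-subset A with outcome Y satisfies |Z \ A| <= e0' and |A \ Z| <= e1'.
   Hence |Z| <= d + e0', and A is determined by A /\ Z together with a set of at
   most e1' points outside Z, so the fibre over Y has at most
   2^|Z| * V(n - |Z|, e1') elements, where V(N, e) = sum_(k <= e) C(N, k).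
   Summing over the 2^m outcomes, C(n, d) <= 2^(m + |Z|) * V(n - |Z|, e1').
   Taking logarithms, (n/d)^d <= C(n, d) gives the main term, and
   V(N, e) <= (N + e)^N / (e^e N^(N - e)) <= (e_Euler N / e)^e bounds the last
   factor.  Writing n - |Z| = (n - d - e0') + s, the excess s costs at most s
   bits, and |Z| + s = d + e0'. *)

Lemma leq_expn2r k a b : a <= b -> a ^ k <= b ^ k.
Proof. by case: k => // k; rewrite leq_exp2r. Qed.

Lemma leq_exp_bin n d : d <= n -> n ^ d <= d ^ d * 'C(n, d).
Proof.
elim: d n => [|d IH] [|n] //; rewrite ltnS => le_dn.
have d_pow_gt0 : 0 < d ^ d by rewrite expn_gt0; case: d {IH le_dn}.
rewrite expnS [d.+1 ^ d.+1]expnS -mulnA mulnCA -[d.+1 * _]mul_bin_diag.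
rewrite mulnCA leq_mul2l /= -(leq_pmul2r d_pow_gt0).
apply: (@leq_trans (d.+1 ^ d * n ^ d)).
  by rewrite -!expnMn leq_expn2r // !mulSn [n * d]mulnC leq_add2r.
by rewrite -mulnA leq_mul2l mulnC IH ?orbT.
Qed.

Definition hamming_vol N e := \sum_(k < e.+1) 'C(N, k).

Lemma hamming_vol0 N : hamming_vol N 0 = 1.
Proof. by rewrite /hamming_vol big_ord_recl big_ord0 bin0. Qed.

Lemma hamming_vol_gt0 N e : 0 < hamming_vol N e.
Proof. by rewrite /hamming_vol big_ord_recl bin0. Qed.

Lemma card_small_subsets (T : finType) (S : {set T}) e :
  #|[set B : {set T} | B \subset S & #|B| <= e]| = hamming_vol #|S| e.
Proof.
elim: e => [|e IH].
  rewrite hamming_vol0 -(cards1 (@set0 T)); apply: eq_card => B.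
  by rewrite !inE leqn0 cards_eq0; case: eqP => [->|]; rewrite ?sub0set ?andbF.
rewrite /hamming_vol big_ord_recr /= -/(hamming_vol _ e) -IH -(cards_draws S e.+1) -cardsUI.
rewrite (_ : _ :&: _ = set0) ?cards0 ?addn0; last first.
  apply/setP => B; rewrite !inE; case: leqP => [le_Be|]; rewrite ?andbF //.
  by rewrite (@ltn_eqF #|B| e.+1) ?andbF.
by apply: eq_card => B; rewrite !inE -andb_orr leq_eqVlt ltnS orbC.
Qed.

Lemma hamming_vol_le_pow2 N e : hamming_vol N e <= 2 ^ N.
Proof.
rewrite -(card_ord N) -cardsT -card_small_subsets -card_powerset.
by apply: subset_leq_card; apply/subsetP => B; rewrite !inE => /andP[].
Qed.

Lemma hamming_vol_bound N e :
  e <= N -> e ^ e * N ^ (N - e) * hamming_vol N e <= (N + e) ^ N.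
Proof.
move=> le_eN; rewrite expnDn /hamming_vol big_distrr /=.
rewrite (big_ord_widen N.+1 (fun k => e ^ e * N ^ (N - e) * 'C(N, k))) ?ltnS //.
rewrite [X in _ <= X](bigID (fun k : 'I_N.+1 => k < e.+1)) /=.
apply: leq_trans (leq_addr _ _); apply: leq_sum => k; rewrite ltnS => le_ke.
rewrite mulnC leq_mul2l; apply/orP; right.
have -> : e ^ e = e ^ k * e ^ (e - k) by rewrite -expnD subnKC.
have -> : N ^ (N - k) = N ^ (e - k) * N ^ (N - e).
  by rewrite -expnD addnC addnBA ?subnK.
by rewrite [X in _ <= X]mulnC mulnA leq_mul2r leq_mul2l leq_expn2r ?orbT.
Qed.

Lemma card_near_le (T : finType) (F : {set {set T}}) (Z : {set T}) e :
  (forall A, A \in F -> #|A :\: Z| <= e) -> #|F| <= 2 ^ #|Z| * hamming_vol #|~: Z| e.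
Proof.
move=> near_F; pose split_Z (A : {set T}) := (A :&: Z, A :\: Z).
have split_inj : injective split_Z.
  by move=> A B [AZ_eq AnZ_eq]; rewrite -(setID A Z) -(setID B Z) AZ_eq AnZ_eq.
rewrite -(card_imset F split_inj) -card_powerset -card_small_subsets -cardsX.
apply: subset_leq_card; apply/subsetP => _ /imsetP [A FA ->].
by rewrite !inE subsetIr subsetDr near_F.
Qed.

Definition indicator n (A : {set 'I_n}) : bvec n := fun i => i \in A.

Lemma supp_indicator n (A : {set 'I_n}) : supp (indicator A) = A.
Proof. by apply/setP => i; rewrite inE. Qed.

Lemma close_eqfun n e0 e1 (x y : bvec n) : x =1 y -> close e0 e1 x y.
Proof.
move=> eq_xy; apply/andP; split; rewrite (eq_card0 (A := [set i | _])) // => i;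
  by rewrite inE eq_xy; case: (y i).
Qed.

Section ResilientCounting.

Variables (m n d e0 e1 : nat) (M : bmatrix m n).
Hypothesis resM : resilient 0 0 e0 e1 d M.

Definition outcome (A : {set 'I_n}) : {set 'I_m} := [set i | measure M (indicator A) i].

Lemma resilient_decoder (Y : {set 'I_m}) :
  exists Z : {set 'I_n}, forall A : {set 'I_n}, #|A| <= d -> outcome A = Y ->
    #|Z :\: A| <= e0 /\ #|A :\: Z| <= e1.
Proof.
have [z dec_z] := resM (indicator Y); exists (supp z) => A A_sparse outA.
have sparse_A : sparse d (indicator A) by rewrite /sparse supp_indicator.
have /andP[] : close e0 e1 (indicator A) z.
  apply/negPn/negP => /(dec_z _ sparse_A)/negP; apply; apply: close_eqfun => i.
  by rewrite /indicator -outA inE.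
have -> : [set i | ~~ indicator A i & z i] = supp z :\: A.
  by apply/setP => i; rewrite !inE andbC.
have -> : [set i | indicator A i & ~~ z i] = A :\: supp z.
  by apply/setP => i; rewrite !inE andbC.
by split.
Qed.

Definition fiber (Y : {set 'I_m}) := [set A : {set 'I_n} | #|A| == d & outcome A == Y].

Lemma card_fiber_le (Y : {set 'I_m}) :
  exists2 z, z <= minn n (d + e0) & #|fiber Y| <= 2 ^ z * hamming_vol (n - z) e1.
Proof.
have [Z decZ] := resilient_decoder Y.
have [->|[A0 fib_A0]] := set_0Vmem (fiber Y); first by exists 0; rewrite ?cards0.
have near_Z A : A \in fiber Y -> #|Z :\: A| <= e0 /\ #|A :\: Z| <= e1.
  by rewrite inE => /andP[/eqP cardA /eqP outA]; apply: decZ; rewrite ?cardA.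
exists #|Z|.
  rewrite leq_min (leq_trans (max_card _)) ?card_ord //= -(cardsID A0 Z).
  have := (near_Z A0 fib_A0).1; move: fib_A0; rewrite inE => /andP[/eqP <- _].
  by apply: leq_add; rewrite subset_leq_card ?subsetIr.
have card_coZ : #|~: Z| = n - #|Z| by rewrite -[n in n - _](card_ord n) -(cardsC Z) addKn.
by rewrite -card_coZ; apply: card_near_le => A /near_Z[].
Qed.

Lemma bin_le_resilient :
  exists z, [/\ z <= n, z <= d + e0 & 'C(n, d) <= 2 ^ (m + z) * hamming_vol (n - z) e1].
Proof.
pose g (z : 'I_(minn n (d + e0)).+1) := 2 ^ z * hamming_vol (n - z) e1.
have [z max_g] := @eq_bigmax _ g (ltac:(by rewrite card_ord)).
exists z; split; try by have := ltn_ord z; rewrite ltnS leq_min => /andP[].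
have fibers : 'C(n, d) = \sum_(Y : {set 'I_m}) #|fiber Y|.
  rewrite -[n in 'C(n, _)](card_ord n) -card_draws -sum1_card (partition_big outcome predT) //=.
  by apply: eq_bigr => Y _; rewrite -sum1_card; apply: eq_bigl => A; rewrite !inE.
have card_sets : #|{: {set 'I_m}}| = 2 ^ m.
  rewrite -[m in 2 ^ m](card_ord m) -[#|'I_m|]cardsT -card_powerset -cardsT.
  by apply: eq_card => Y; rewrite !inE subsetT.
rewrite fibers expnD -mulnA -/(g z) -max_g -card_sets -sum_nat_const.
apply: leq_sum => Y _; have [z' le_z' fib_le] := card_fiber_le Y.
by apply: leq_trans fib_le (@leq_bigmax _ g (Ordinal (leq_ltn_trans le_z' (ltnSn _)))).
Qed.

End ResilientCounting.

Open Scope R_scope.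

Lemma INR_leq a b : (a <= b)%N -> INR a <= INR b.
Proof. by move/leP; apply: le_INR. Qed.

Lemma INR_expn a k : INR (a ^ k)%N = INR a ^ k.
Proof. by elim: k => [|k IH] //=; rewrite expnS mult_INR IH. Qed.

Lemma INR_2 : INR 2 = 2.
Proof. by rewrite /=; lra. Qed.

Lemma ln_le x y : 0 < x -> x <= y -> ln x <= ln y.
Proof. by move=> x_gt0 [/(ln_increasing _ _ x_gt0)/Rlt_le | ->] //; apply: Rle_refl. Qed.

Lemma ln_le_sub1 x : 0 < x -> ln x <= x - 1.
Proof. by move=> x_gt0; have := exp_ineq1_le (ln x); rewrite exp_ln //; lra. Qed.

Lemma ln2_gt0 : 0 < ln 2.
Proof. by have := ln_lt_2; lra. Qed.

Lemma log2_le x y : 0 < x -> x <= y -> log2 x <= log2 y.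
Proof.
move=> x_gt0 le_xy; apply: Rmult_le_compat_r (ln_le x_gt0 le_xy).
by apply/Rlt_le/Rinv_0_lt_compat/ln2_gt0.
Qed.

Lemma log2_mult x y : 0 < x -> 0 < y -> log2 (x * y) = log2 x + log2 y.
Proof. by move=> x_gt0 y_gt0; rewrite /log2 ln_mult //; field; have := ln2_gt0; lra. Qed.

Lemma ln_div x y : 0 < x -> 0 < y -> ln (x / y) = ln x - ln y.
Proof.
by move=> x_gt0 y_gt0; rewrite /Rdiv ln_mult ?ln_Rinv //; apply: Rinv_0_lt_compat.
Qed.

Lemma log2_div x y : 0 < x -> 0 < y -> log2 (x / y) = log2 x - log2 y.
Proof. by move=> x_gt0 y_gt0; rewrite /log2 ln_div //; field; have := ln2_gt0; lra. Qed.

Lemma log2_pow x k : 0 < x -> log2 (x ^ k) = INR k * log2 x.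
Proof. by move=> x_gt0; rewrite /log2 ln_pow //; field; have := ln2_gt0; lra. Qed.

Lemma log2_1 : log2 1 = 0.
Proof. by rewrite /log2 ln_1 /Rdiv Rmult_0_l. Qed.

Lemma log2_2 : log2 2 = 1.
Proof. by rewrite /log2; field; have := ln2_gt0; lra. Qed.

Lemma log2_bin_ge n d :
  (0 < d)%N -> (d <= n)%N -> INR d * log2 (INR n / INR d) <= log2 (INR 'C(n, d)).
Proof.
move=> d_gt0 le_dn.
have d_pos : 0 < INR d by apply/lt_0_INR/ltP.
have n_pos : 0 < INR n by apply/lt_0_INR/ltP; apply: leq_trans le_dn.
have bin_pos : 0 < INR 'C(n, d) by apply/lt_0_INR/ltP; rewrite bin_gt0.
have pow_le : INR n ^ d <= INR d ^ d * INR 'C(n, d).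
  by rewrite -!INR_expn -mult_INR; apply/INR_leq/leq_exp_bin.
have := log2_le (pow_lt _ d n_pos) pow_le.
rewrite log2_mult ?log2_pow ?log2_div //; try exact: pow_lt.
by rewrite Rmult_minus_distr_l; lra.
Qed.

Lemma ln_hamming_vol_le N e :
  (0 < e)%N -> (e <= N)%N ->
  ln (INR (hamming_vol N e)) <= INR e * (1 + ln (INR N / INR e)).
Proof.
move=> e_gt0 le_eN.
have e_pos : 0 < INR e by apply/lt_0_INR/ltP.
have N_pos : 0 < INR N by apply/lt_0_INR/ltP; apply: leq_trans le_eN.
have vol_pos : 0 < INR (hamming_vol N e) by apply/lt_0_INR/ltP/hamming_vol_gt0.
have ln_add_le : ln (INR N + INR e) <= ln (INR N) + INR e / INR N.
  have -> : INR N + INR e = INR N * (1 + INR e / INR N) by field; lra.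
  have frac_pos : 0 < INR e / INR N by apply: Rdiv_lt_0_compat.
  by rewrite ln_mult; [have := @ln_le_sub1 (1 + INR e / INR N); lra | lra | lra].
have prod_pos : 0 < INR e ^ e * INR N ^ (N - e) * INR (hamming_vol N e).
  by repeat apply: Rmult_lt_0_compat; try apply: pow_lt.
have vol_bound : INR e ^ e * INR N ^ (N - e) * INR (hamming_vol N e) <= (INR N + INR e) ^ N.
  by rewrite -plus_INR -!INR_expn -!mult_INR; apply/INR_leq/hamming_vol_bound.
have ln_prod : ln (INR e ^ e * INR N ^ (N - e) * INR (hamming_vol N e))
    = INR e * ln (INR e) + (INR N - INR e) * ln (INR N) + ln (INR (hamming_vol N e)).
  rewrite !ln_mult ?ln_pow -?minus_INR //; try apply/leP; try apply: Rmult_lt_0_compat;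
    by try apply: pow_lt.
have := ln_le prod_pos vol_bound; rewrite ln_prod ln_pow; last lra.
have := Rmult_le_compat_l _ _ _ (Rlt_le _ _ N_pos) ln_add_le.
have : INR N * (INR e / INR N) = INR e by field; lra.
rewrite ln_div //; nra.
Qed.

Lemma ln_shift_div_le a K s :
  0 <= s -> 0 < K -> 0 < a -> ln ((K + s) / a) <= ln (K / a) + s / K.
Proof.
move=> s_ge0 K_pos a_pos.
have -> : (K + s) / a = K / a * (1 + s / K) by field; lra.
have sK_ge0 : 0 <= s / K by apply: Rmult_le_pos; [| apply/Rlt_le/Rinv_0_lt_compat].
rewrite ln_mult; try apply: Rdiv_lt_0_compat; try lra.
by have := @ln_le_sub1 (1 + s / K); lra.
Qed.

Lemma log2_hamming_vol_le N e (K s : R) :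
  (0 < e)%N -> INR N = K + s -> 0 <= s ->
  log2 (INR (hamming_vol N e)) <= s + 4 * INR e * log2 (Rmax 2 (K / INR e)).
Proof.
move=> e_gt0 N_eq s_ge0.
have e_pos : 0 < INR e by apply/lt_0_INR/ltP.
have vol_pos : 0 < INR (hamming_vol N e) by apply/lt_0_INR/ltP/hamming_vol_gt0.
have ln2_pos := ln2_gt0; have ln2_half := ln_lt_2.
suff ln_bound : ln (INR (hamming_vol N e)) <= s * ln 2 + 4 * INR e * ln (Rmax 2 (K / INR e)).
  rewrite /log2 (_ : s + _ = (s * ln 2 + 4 * INR e * ln (Rmax 2 (K / INR e))) / ln 2).
    by apply: Rmult_le_compat_r ln_bound; apply/Rlt_le/Rinv_0_lt_compat.
  by field; lra.
(* For K <= 4e the trivial bound 2^N suffices; otherwise ln (K/e) > ln 4 > 1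
   absorbs the additive e of [ln_hamming_vol_le], and e s / K < s / 4. *)
have [K_small | K_large] := Rle_or_lt K (4 * INR e).
  have ln2_le : ln 2 <= ln (Rmax 2 (K / INR e)) by apply: ln_le; [lra | apply: Rmax_l].
  have : ln (INR (hamming_vol N e)) <= INR N * ln 2.
    rewrite -ln_pow; last lra.
    by apply: ln_le vol_pos _; rewrite -INR_2 -INR_expn; apply/INR_leq/hamming_vol_le_pow2.
  by nra.
have ratio_gt4 : 4 < K / INR e.
  by apply: (Rmult_lt_reg_r (INR e)) => //; rewrite /Rdiv Rmult_assoc Rinv_l; lra.
rewrite Rmax_right; last lra.
have ln4 : ln 4 = 2 * ln 2 by rewrite (_ : 4 = 2 * 2) ?ln_mult; lra.
have L_gt : ln 4 < ln (K / INR e) by apply: ln_increasing; lra.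
have le_eN : (e <= N)%N by apply/leP/INR_le; lra.
have K_pos : 0 < K by lra.
have := ln_shift_div_le s_ge0 K_pos e_pos; rewrite -N_eq => ln_N_le.
have es_le : INR e * (s / K) <= s / 4.
  have eK_le : INR e / K <= / 4.
    apply: (Rmult_le_reg_r (4 * K)); first lra.
    by rewrite /Rdiv (_ : INR e * / K * (4 * K) = 4 * INR e); [lra | field; lra].
  by rewrite (_ : INR e * (s / K) = s * (INR e / K)); [nra | field; lra].
have := ln_hamming_vol_le e_gt0 le_eN.
nra.
Qed.

Theorem mainTheorem10 :
  exists C : R, (0 < C)%R /\
  forall (m n d e0' e1' : nat) (M : bmatrix m n),
    (0 < d)%N -> (d <= n)%N ->
    resilient 0 0 e0' e1' d M ->
    (INR d * log2 (INR n / INR d) - INR d - INR e0'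
       - C * (if eqn e1' O then 0%R
              else INR e1' * log2 (Rmax 2 ((INR n - INR d - INR e0') / INR e1')))
     <= INR m)%R.
Proof.
exists 4; split; first lra.
move=> m n d e0 e1 M d_gt0 le_dn resM.
have [z [le_zn le_z_de0 bin_le]] := bin_le_resilient resM.
have vol_pos : 0 < INR (hamming_vol (n - z) e1) by apply/lt_0_INR/ltP/hamming_vol_gt0.
have bin_pos : 0 < INR 'C(n, d) by apply/lt_0_INR/ltP; rewrite bin_gt0.
have log2_bin_le : log2 (INR 'C(n, d)) <= INR m + INR z + log2 (INR (hamming_vol (n - z) e1)).
  have := log2_le bin_pos (INR_leq bin_le).
  rewrite mult_INR INR_expn INR_2 log2_mult ?log2_pow ?log2_2 ?plus_INR //; try lra.
  by apply: pow_lt; lra.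
have z_excess : INR z + INR (d + e0 - z) = INR d + INR e0.
  by rewrite minus_INR ?plus_INR; [lra | apply/leP].
have := log2_bin_ge d_gt0 le_dn.
have := pos_INR (d + e0 - z).
case: eqnP => [e1_0 | e1_neq0].
  by rewrite e1_0 hamming_vol0 /= log2_1 in log2_bin_le; lra.
have N_eq : INR (n - z) = (INR n - INR d - INR e0) + INR (d + e0 - z).
  by rewrite minus_INR; [lra | apply/leP].
have e1_gt0 : (0 < e1)%N by rewrite lt0n; apply/eqP.
have := log2_hamming_vol_le e1_gt0 N_eq (pos_INR _).
lra.
Qed.
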